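(* Let $n\ge 7$, $\zeta_n=e^{2\pi i/n}$, $K=\mathbb{Q}(\zeta_n)$, and let $J=\{j_1<\dots<j_k\}\subseteq\{0,1,\dots,n-1\}$ with $k\ge 3$ and $j_k\le (n-1)/2$, such that the elements of $J$ do not form an arithmetic progression. Let $G$ be the $k\times n$ matrix over $K$ with $G_{i,l}=\zeta_n^{j_i(l-1)}$, and assume all $k\times k$ submatrices of $G$ have non-zero determinant in $K$. Let $P_{\mathrm{bad}}$ be the set of rational primes dividing $|N_{K/\mathbb{Q}}(\Delta)|$ for some such determinant $\Delta$. Let $p\notin P_{\mathrm{bad}}$ be a prime with $p\nmid n$, $\mathfrak{p}$ a prime ideal of $\mathbb{Z}[\zeta_n]$ above $p$, $\mathbb{F}_q\cong\mathbb{Z}[\zeta_n]/\mathfrak{p}$ ($q=p^f$, $f$ the multiplicative order of $p$ mod $n$), and $\overline{\mathcal{C}}$ the code over $\mathbb{F}_q$ generated by the reduction of $G$ modulo $\mathfrak{p}$. Then $\overline{\mathcal{C}}$ (a cyclic $[n,k]$ MDS code) is of non-RS type.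
   Context: A (generalized) Reed–Solomon code over a field $F$ has a generator matrix $(v_j x_j^{i-1})_{1\le i\le k,1\le j\le n}$ with distinct $x_j\in F$ and $v_j\in F^\times$; a code is of RS type if it is equivalent to such a code (by change of generator matrix, column permutation and non-zero column scaling), and of non-RS type otherwise. $N_{K/\mathbb{Q}}$ is the field norm. *)

From HB Require Import structures.
From mathcomp Require Import all_boot all_order all_algebra all_fingroup all_field.
Set Implicit Arguments. Unset Strict Implicit. Unset Printing Implicit Defensive.
Import Order.TTheory GRing.Theory Num.Theory.
Local Open Scope ring_scope.

(* The k x n matrix (w^(j_i * l))_{i<k, l<n}  (0-based column index l = l'-1). *)
Definition cycmx (R : comNzRingType) (k n : nat) (j : 'I_k -> nat) (w : R)
  : 'M[R]_(k, n) := \matrix_(i < k, l < n) w ^+ (j i * l).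

Definition cycminor (R : comNzRingType) (k n : nat) (j : 'I_k -> nat) (w : R)
  (s : 'I_k -> 'I_n) : R := \det (colsub s (cycmx n j w)).

(* N_{K/Q} of the minor Delta(s) = det(colsub s G) with G = cycmx n j z,
   K = Q(z), z a primitive n-th root of unity: the product of the Galois
   conjugates sigma_m(Delta), sigma_m : z |-> z^m, m in (Z/n)^*.          *)
Definition normminor (k n : nat) (j : 'I_k -> nat) (z : algC)
  (s : 'I_k -> 'I_n) : algC :=
  \prod_(m < n | coprime m n) cycminor j (z ^+ m) s.

Definition GRSmx (F : fieldType) (k n : nat) (x v : 'I_n -> F) : 'M[F]_(k, n) :=
  \matrix_(i < k, l < n) (v l * x l ^+ i).

(* The code generated by A (its row space) is of RS type: it is equivalent,
   by change of generator matrix (same row space), column permutation and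
   non-zero column scaling, to a generalized RS code. *)
Definition RS_type (F : fieldType) (k n : nat) (A : 'M[F]_(k, n)) : Prop :=
  exists (x v u : 'I_n -> F) (sg : 'S_n),
    injective x /\ (forall l, v l != 0) /\ (forall l, u l != 0) /\
    (A == col_perm sg (GRSmx k x v) *m diag_mx (\row_l u l))%MS.

From HB Require Import structures.
From mathcomp Require Import all_boot all_order all_algebra all_fingroup all_field.
From mathcomp Require Import ring zify.
Import Order.TTheory GRing.Theory Num.Theory.

Set Implicit Arguments.
Unset Strict Implicit.
Unset Printing Implicit Defensive.

(* The Schur square of a generalized RS [n, k] code has dimension at most
   2k - 1.  The Schur square of the code generated by (zeta^(j_i l)) contains
   the rows (zeta^(s l)) for every s in the sumset J + J; these are
   Vandermonde rows with distinct nodes since all such s are below n, and a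
   set J that is not an arithmetic progression has |J + J| >= 2k. *)

Section Sumset.

Variables (f : nat -> nat) (k : nat).
Hypothesis f_incr : forall a b, (a < b < k)%N -> (f a < f b)%N.

(* f 0 + f 0 < f 0 + f 1 < f 1 + f 1 < f 1 + f 2 < ... for t < 2k - 1 *)
Let chain t := (f t./2 + f (uphalf t))%N.

Lemma chain_homo : {in gtn (2 * k).-1 &, {homo chain : s t / s < t}}.
Proof.
apply: homo_ltn_in => [s t u|s t|t]; rewrite ?unfold_in /=.
- exact: ltn_trans.
- by move=> ? ? u; rewrite unfold_in /=; lia.
move=> _ t_lt; rewrite /chain /= addnC ltn_add2l f_incr //; lia.
Qed.

Lemma arith_prog_of_midpoints :
    (forall i, (i.+2 < k)%N -> f i + f i.+2 = (f i.+1).*2)%N ->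
  forall i, (i < k)%N -> f i = (f 0 + i * (f 1 - f 0))%N.
Proof.
move=> mid.
suff step i : (i.+1 < k)%N ->
    f i = (f 0 + i * (f 1 - f 0))%N /\ f i.+1 = (f 0 + i.+1 * (f 1 - f 0))%N.
  by case=> [|i] i_lt; [lia | case: (step i i_lt)].
elim: i => [lt1|i IH lt_i].
  by have := @f_incr 0 1; split; lia.
have [fi fi1] := IH (ltnW lt_i); have := mid i lt_i; split; first by [].
nia.
Qed.

Lemma sumset_size :
    ~ (exists a d, forall i, (i < k)%N -> f i = a + i * d)%N ->
  (2 * k <= size (undup [seq f a + f b | a <- iota 0 k, b <- iota 0 k]))%N.
Proof.
move=> not_AP.
have [i /andP[i_lt bend]] :
    exists i, (i.+2 < k)%N && (f i + f i.+2 != (f i.+1).*2)%N.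
  case: (boolP [exists i : 'I_k, (i.+2 < k)%N && (f i + f i.+2 != (f i.+1).*2)%N]).
    by case/existsP=> i; exists i.
  move/existsPn=> mid; exfalso; apply: not_AP.
  exists (f 0), (f 1 - f 0)%N; apply: arith_prog_of_midpoints => i i_lt.
  have i_k : (i < k)%N by lia.
  by apply/eqP; move: (mid (Ordinal i_k)); rewrite /= i_lt negbK.
pose x := (f i + f i.+2)%N.
have chain_mono := leq_mono_in chain_homo.
have x_notin : x \notin [seq chain t | t <- iota 0 (2 * k).-1].
  apply/mapP=> -[t]; rewrite mem_iota /= => t_lt x_eq.
  have chain_dom s : (s < (2 * k).-1)%N -> s \in gtn (2 * k).-1 by rewrite inE.
  have [c1 c2 c3] : [/\ chain i.*2.+1 = (f i + f i.+1)%N,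
      chain i.*2.+2 = (f i.+1).*2 & chain i.*2.+3 = (f i.+1 + f i.+2)%N].
    by rewrite /chain /= uphalf_double doubleK addnn.
  case: (ltngtP t i.*2.+2) => [t_lt'|t_gt|t_eq].
  - have := chain_mono t i.*2.+1 (chain_dom _ t_lt) (chain_dom i.*2.+1 ltac:(lia)).
    by have := @f_incr i.+1 i.+2; rewrite -x_eq c1 /x; lia.
  - have := chain_mono i.*2.+3 t (chain_dom i.*2.+3 ltac:(lia)) (chain_dom _ t_lt).
    by have := @f_incr i i.+1; rewrite -x_eq c3 /x; lia.
  - by move: bend; rewrite -/x x_eq t_eq c2 eqxx.
have size_xC : size (x :: [seq chain t | t <- iota 0 (2 * k).-1]) = (2 * k)%N.
  by rewrite /= size_map size_iota; lia.
rewrite -size_xC; apply: uniq_leq_size => [|s].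
  rewrite /= x_notin map_inj_in_uniq ?iota_uniq // => s t.
  rewrite !mem_iota => s_lt t_lt.
  by apply: (incn_inj_in chain_mono); rewrite unfold_in /=; lia.
rewrite mem_undup inE => /orP[/eqP ->|/mapP[t]].
  by apply: allpairs_f; rewrite mem_iota; lia.
by rewrite mem_iota => t_lt ->; apply: allpairs_f; rewrite mem_iota /=; lia.
Qed.

End Sumset.

Local Open Scope ring_scope.

Definition powmx (F : fieldType) (n : nat) (w : F) (L : seq nat) : 'M[F]_(size L, n) :=
  \matrix_(t < size L, l < n) w ^+ (nth 0%N L t * l).

Lemma mxrank_powmx (F : fieldType) (n : nat) (w : F) (L : seq nat) :
  n.-primitive_root w -> uniq L -> all (gtn n) L -> \rank (powmx n w L) = size L.
Proof.
move=> w_prim L_uniq L_lt.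
have L_n : (size L <= n)%N.
  rewrite -(size_iota 0 n); apply: uniq_leq_size => // s sL.
  by rewrite mem_iota /=; exact: (allP L_lt).
have L_nth_lt (t : 'I_(size L)) : (nth 0%N L t < n)%N.
  exact: (allP L_lt _ (mem_nth 0%N (ltn_ord t))).
have V_def : colsub (widen_ord L_n) (powmx n w L) =
    (Vandermonde _ (\row_t w ^+ nth 0%N L t))^T.
  by apply/matrixP => t l; rewrite !mxE -exprM.
apply/eqP; rewrite eqn_leq rank_leq_row /=.
apply: leq_trans (mxrankM_maxl _ (colsub (widen_ord L_n) 1)).
rewrite mulmx_colsub mulmx1 V_def mxrank_tr mxrank_unit //.
rewrite unitmxE det_Vandermonde unitfE.
rewrite prodf_seq_neq0; apply/allP => a _ /=.
rewrite prodf_seq_neq0; apply/allP => b _ /=; apply/implyP => lt_ab.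
rewrite subr_eq0 !mxE (eq_prim_root_expr w_prim) !modn_small ?L_nth_lt //.
by rewrite nth_uniq // neq_ltn lt_ab orbT.
Qed.

(* A = M B where B a l = c l * y l ^ a, so the entrywise product of two rows
   of A is a combination of the 2k - 1 rows (c l ^ 2 * y l ^ e)_l. *)
Lemma RS_type_schur_rank (F : fieldType) (k n m : nat)
    (A : 'M[F]_(k, n)) (S : 'M[F]_(m, n)) :
    RS_type A -> (forall t, exists a b, forall l, S t l = A a l * A b l) ->
  (\rank S <= (2 * k).-1)%N.
Proof.
move=> [x [v [u [sg [_ [_ [_ /andP[/submxP[M A_def] _]]]]]]]] S_rows.
set B := col_perm _ _ *m _ in A_def.
pose c l := v (sg l) * u l.
pose y l := x (sg l).
have AE a l : A a l = \sum_(i < k) M a i * (c l * y l ^+ i).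
  by rewrite A_def mxE; apply: eq_bigr => i _; rewrite /B mul_mx_diag !mxE /c /y; ring.
pose T := \matrix_(e < (2 * k).-1, l < n) (c l ^+ 2 * y l ^+ e).
apply: leq_trans (rank_leq_row T); apply: mxrankS; apply/row_subP => t.
have [a [b S_ab]] := S_rows t.
have ab_lt (i i' : 'I_k) : (i + i' < (2 * k).-1)%N.
  by case: i i' => [i ?] [i' ?] /=; lia.
have -> : row t S = \sum_(i < k) \sum_(i' < k)
    (M a i * M b i') *: row (Ordinal (ab_lt i i')) T.
  apply/rowP => l; rewrite !mxE summxE S_ab !AE mulr_suml; apply: eq_bigr => i _.
  by rewrite summxE mulr_sumr; apply: eq_bigr => i' _; rewrite !mxE exprD; ring.
by apply: summx_sub => i _; apply: summx_sub => i' _; apply/scalemx_sub/row_sub.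
Qed.

Theorem mainTheorem5
  (n k : nat) (j : 'I_k -> nat) (z : algC)
  (p : nat) (F : finFieldType) (w : F) :
  (7 <= n)%N ->
  n.-primitive_root z ->
  (3 <= k)%N ->
  (forall a b : 'I_k, (a < b)%N -> (j a < j b)%N) ->
  (forall a : 'I_k, (2 * j a <= n - 1)%N) ->
  ~ (exists a d : nat, forall i : 'I_k, j i = (a + i * d)%N) ->
  (* all k x k minors of G are non-zero in K *)
  (forall s : 'I_k -> 'I_n, (forall a b : 'I_k, (a < b)%N -> (s a < s b)%N) ->
     cycminor j z s != 0) ->
  (* p is a prime, p not in P_bad, p does not divide n *)
  prime p ->
  (forall (s : 'I_k -> 'I_n) (m : int),
     (forall a b : 'I_k, (a < b)%N -> (s a < s b)%N) ->
     normminor j z s = m%:~R -> ~~ (p%:Z %| m)%Z) ->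
  ~~ (p %| n)%N ->
  (* F = Z[zeta_n]/P for a prime P above p, w = zeta_n mod P *)
  p \in [pchar F] ->
  n.-primitive_root w ->
  (forall y : F, exists q : {poly int}, y = (map_poly intr q).[w]) ->
  ~ RS_type (cycmx n j w).
Proof.
move=> n_ge7 _ k_ge3 j_incr j_small not_AP _ _ _ _ _ w_prim _ RS.
pose jn i := oapp j 0%N (insub i : option 'I_k).
have jnE (a : 'I_k) : jn a = j a by rewrite /jn valK.
pose L : seq nat := undup [seq (jn a + jn b)%N | a <- iota 0 k, b <- iota 0 k].
have L_sums s : s \in L -> exists a b : 'I_k, s = (j a + j b)%N.
  rewrite mem_undup => /allpairsP[[a b] [/=]]; rewrite !mem_iota /= => a_lt b_lt ->.
  by exists (Ordinal a_lt), (Ordinal b_lt); rewrite -!jnE.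
have L_size : (2 * k <= size L)%N.
  apply: sumset_size => [a b /andP[lt_ab b_lt]|[a0 [d AP]]].
    rewrite -[a]/(val (Ordinal (ltn_trans lt_ab b_lt))) -[b]/(val (Ordinal b_lt)).
    by rewrite !jnE j_incr.
  by apply: not_AP; exists a0, d => i; rewrite -jnE AP.
have L_lt : all (gtn n) L.
  apply/allP => s /L_sums[a [b ->]] /=.
  by have := j_small a; have := j_small b; lia.
have L_rows t : exists a b,
    forall l, powmx n w L t l = cycmx n j w a l * cycmx n j w b l.
  have [a [b L_t]] := L_sums _ (mem_nth 0%N (ltn_ord t)).
  by exists a, b => l; rewrite !mxE L_t mulnDl exprD.
have := RS_type_schur_rank RS L_rows.
rewrite mxrank_powmx ?undup_uniq //; apply/negP; rewrite -ltnNge.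
by apply: leq_trans L_size; rewrite prednK // muln_gt0 (leq_trans _ k_ge3).
Qed.
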